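(* Let $\mathcal{A}$ be a commutative $\sigma$-finite W*-algebra or a commutative AW*-algebra, and let $\mathcal{E}$ be a Hilbert C*-module over $\mathcal{A}$ of rank $d$. Let $\{\tau_j\}_{j=1}^n$ be a collection in $\mathcal{E}$ with $\langle\tau_j,\tau_j\rangle=1$ for all $1\leq j\leq n$. Then \[ n^2\geq \|\mathrm{MFP}(\{\tau_j\}_{j=1}^n)\|\geq \mathrm{MFP}(\{\tau_j\}_{j=1}^n)\geq \frac{n^2}{d}. \]
   Context: A W*-algebra is $\sigma$-finite if it contains at most countably many mutually orthogonal (nonzero) projections. A C*-algebra is an AW*-algebra if every set of orthogonal projections has a supremum and every maximal commutative self-adjoint subalgebra is generated by its projections. Such algebras are unital, with identity $1$. The $\mathcal{A}$-valued inner product on $\mathcal{E}$ is linear in the first variable and conjugate-linear in the second. $\mathcal{E}$ has rank $d$ if it has an orthonormal basis $\{\omega_j\}_{j=1}^d$, i.e. $\langle\omega_j,\omega_k\rangle=\delta_{jk}1$ and $x=\sum_{j=1}^d\langle x,\omega_j\rangle\omega_j$ for all $x$. The modular frame potential is $\mathrm{MFP}(\{\tau_j\}_{j=1}^n)=\sum_{j=1}^n\sum_{k=1}^n\langle \tau_j, \tau_k\rangle \langle \tau_k, \tau_j\rangle\in\mathcal{A}$. Inequalities between elements of $\mathcal{A}$ are in the order on self-adjoint elements, a real number $c$ being identified with $c\cdot1$; $\|\cdot\|$ is the C*-norm. *)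

From HB Require Import structures.
From mathcomp Require Import all_boot all_order all_algebra.
From mathcomp Require Import all_classical all_reals.
From mathcomp Require Export complex.
Set Implicit Arguments. Unset Strict Implicit. Unset Printing Implicit Defensive.
Import Order.TTheory GRing.Theory Num.Theory.
Local Open Scope ring_scope.
Local Open Scope classical_set_scope.

Section Defs.
Variable R : realType.
Local Notation C := (R[i]).

Definition cabs (c : C) : R :=
  Num.sqrt (complex.Re c ^+ 2 + complex.Im c ^+ 2).
Definition cconj (c : C) : C := complex.Complex (complex.Re c) (- complex.Im c).

Definition is_norm (V : lmodType C) (nv : V -> R) :=
  (forall x, 0 <= nv x) /\ (forall x, nv x = 0 -> x = 0) /\
  (forall c x, nv (c *: x) = cabs c * nv x) /\
  (forall x y, nv (x + y) <= nv x + nv y).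

Definition cvg_in (V : zmodType) (nv : V -> R) (u : nat -> V) (l : V) :=
  forall e, 0 < e -> exists N, forall m, (N <= m)%N -> nv (u m - l) < e.

Definition cauchy_in (V : zmodType) (nv : V -> R) (u : nat -> V) :=
  forall e, 0 < e -> exists N, forall m p, (N <= m)%N -> (N <= p)%N ->
    nv (u m - u p) < e.

Definition complete_in (V : zmodType) (nv : V -> R) :=
  forall u, cauchy_in nv u -> exists l, cvg_in nv u l.

Definition banach (V : lmodType C) (nv : V -> R) := is_norm nv /\ complete_in nv.

Definition clinear_functional (V : lmodType C) (f : V -> C) :=
  forall c v w, f (c *: v + w) = c * f v + f w.

Section CStar.
Variables (A : comAlgType C) (star : A -> A) (nrm : A -> R).

Definition is_CStar :=
  banach nrm /\
  (forall x y, nrm (x * y) <= nrm x * nrm y) /\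
  (forall x y, star (x + y) = star x + star y) /\
  (forall c x, star (c *: x) = cconj c *: star x) /\
  (forall x y, star (x * y) = star y * star x) /\
  (forall x, star (star x) = x) /\
  (forall x, nrm (star x * x) = nrm x ^+ 2).

Definition self_adjoint (a : A) := star a = a.
Definition cpos (a : A) := exists b, a = star b * b.
Definition cle (a b : A) := [/\ self_adjoint a, self_adjoint b & cpos (b - a)].
Definition rA (r : R) : A := ((r%:C)%C)%:A.

Definition projection (p : A) := p * p = p /\ star p = p.
Definition orth_proj_family (S : set A) :=
  (forall p, S p -> projection p) /\
  (forall p q, S p -> S q -> p <> q -> p * q = 0).

Definition sigma_finite :=
  forall S : set A, orth_proj_family S -> (forall p, S p -> p <> 0) -> countable S.

(* W*-algebra (Sakai): the C*-algebra is, as a Banach space, the dual of some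
   Banach space V, i.e. there is an isometric linear bijection phi from A onto
   the bounded linear functionals on V. *)
Definition W_star :=
  exists (V : lmodType C) (nv : V -> R) (phi : A -> V -> C),
    banach nv /\
    (forall a, clinear_functional (phi a)) /\
    (forall c a b v, phi (c *: a + b) v = c * phi a v + phi b v) /\
    (forall a v, cabs (phi a v) <= nrm a * nv v) /\
    (forall a e, 0 < e -> exists v, nv v <= 1 /\ nrm a - e < cabs (phi a v)) /\
    (forall f : V -> C, clinear_functional f ->
       (exists M, forall v, cabs (f v) <= M * nv v) -> exists a, phi a = f).

Definition is_sup_proj (S : set A) (p : A) :=
  [/\ projection p, (forall q, S q -> cle q p) &
      (forall r, projection r -> (forall q, S q -> cle q r) -> cle p r)].

Definition star_subalg (B : set A) :=
  B 0 /\ (forall x y, B x -> B y -> B (x + y) /\ B (x * y)) /\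
  (forall c x, B x -> B (c *: x)) /\ (forall x, B x -> B (star x)).

Definition comm_set (B : set A) := forall x y, B x -> B y -> x * y = y * x.

Definition max_comm_star_subalg (B : set A) :=
  [/\ star_subalg B, comm_set B &
      forall B', star_subalg B' -> comm_set B' -> B `<=` B' -> B' = B].

Definition norm_closed (B : set A) :=
  forall u l, (forall m, B (u m)) -> cvg_in nrm u l -> B l.

Definition gen_Cstar (P : set A) : set A :=
  \bigcap_(S in [set S | [/\ star_subalg S, norm_closed S & P `<=` S]]) S.

Definition AW_star :=
  (forall S, orth_proj_family S -> exists p, is_sup_proj S p) /\
  (forall B, max_comm_star_subalg B -> B = gen_Cstar (B `&` projection)).

(* E : lmodType A (A is commutative, so left = right module); the C-vector
   space structure is c *: x := c%:A *: x. *)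
Section Module.
Variables (E : lmodType A) (ip : E -> E -> A).

Definition hilbert_module :=
  (forall a x y z, ip (a *: x + y) z = a * ip x z + ip y z) /\
  (forall x y, ip y x = star (ip x y)) /\
  (forall x, cpos (ip x x)) /\
  (forall x, ip x x = 0 -> x = 0) /\
  complete_in (fun x : E => Num.sqrt (nrm (ip x x))).

Definition has_rank (d : nat) :=
  exists w : 'I_d -> E,
    (forall j k, ip (w j) (w k) = (j == k)%:R) /\
    (forall x, x = \sum_(j < d) ip x (w j) *: w j).

Definition MFP (n : nat) (t : 'I_n -> E) : A :=
  \sum_(j < n) \sum_(k < n) ip (t j) (t k) * ip (t k) (t j).

End Module.
End CStar.
End Defs.
Arguments rA {R A} r.

From HB Require Import structures.
From mathcomp Require Import all_boot all_order all_algebra.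
From mathcomp Require Import all_classical all_reals.
From mathcomp Require Import complex.
From mathcomp Require Import ring lra.
Import Order.TTheory GRing.Theory Num.Theory.
Local Open Scope ring_scope.

(* Expand in the basis [w] (only the reconstruction formula
   x = \sum_i <x, w_i> w_i is used).  Then MFP = \sum_{i,l} T_il T_il^*, where
   T is the matrix of the frame operator of [tau], whose trace is n, so
     MFP - n^2/d = \sum_i (T_ii - n/d) (T_ii - n/d)^* + \sum_{i <> l} T_il T_il^*
   is a sum of positive elements; and ||MFP|| <= n^2 since Cauchy-Schwarz gives
   ||<tau_j, tau_k>|| <= 1.
   The order theory this needs is derived from the C*-axioms alone, without
   Gelfand theory: sqrt (1 - h) for ||h|| <= 1 and (1 - Y)^-1 for ||Y|| <= 1/2
   are limits of fixed-point iterations majorized by real ones, and with them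
   a sum of squares of self-adjoint elements is again such a square, so the
   positive elements are closed under addition. *)

Section CommutativeCStarAlgebra.
Local Set Implicit Arguments. Local Unset Strict Implicit.
Variable R : realType.

Lemma nondecreasing_bounded_cauchy (r : nat -> R) (B : R) :
  (forall k, r k <= r k.+1) -> (forall k, r k <= B) ->
  forall e, 0 < e -> exists N, forall m, (N <= m)%N -> r m - r N < e.
Proof.
move=> r_incr r_le_B e e_gt0.
have ub : ubound [set r k | k in setT] B by move=> _ [k _ <-].
have hs : has_sup [set r k | k in setT] by split; [exists (r 0%N), 0%N|exists B].
have [_ [N _ <-] ltN] := sup_adherent e_gt0 hs.
exists N => m _; suff : r m <= sup [set r k | k in setT] by lra.
by apply: ub_le_sup; [exists B|exists m].
Qed.

Local Notation C := R[i].
Variables (A : comAlgType C) (star : A -> A) (nrm : A -> R).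
Hypothesis HC : is_CStar star nrm.
Local Notation sa := (self_adjoint star).

Lemma nrm_ge0 x : 0 <= nrm x.
Proof. by case: HC => [[[+ _] _] _]; apply. Qed.
Lemma nrm_eq0 x : nrm x = 0 -> x = 0.
Proof. by case: HC => [[[_ [+ _]] _] _]; apply. Qed.
Lemma nrmZ c x : nrm (c *: x) = cabs c * nrm x.
Proof. by case: HC => [[[_ [_ [+ _]]] _] _]; apply. Qed.
Lemma nrmD x y : nrm (x + y) <= nrm x + nrm y.
Proof. by case: HC => [[[_ [_ [_ +]]] _] _]; apply. Qed.
Lemma nrm_complete : complete_in nrm.
Proof. by case: HC => [[_ +] _]. Qed.
Lemma nrmM x y : nrm (x * y) <= nrm x * nrm y.
Proof. by case: HC => [_ [+ _]]; apply. Qed.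
Lemma starD x y : star (x + y) = star x + star y.
Proof. by case: HC => [_ [_ [+ _]]]; apply. Qed.
Lemma starZ c x : star (c *: x) = cconj c *: star x.
Proof. by case: HC => [_ [_ [_ [+ _]]]]; apply. Qed.
Lemma starM x y : star (x * y) = star y * star x.
Proof. by case: HC => [_ [_ [_ [_ [+ _]]]]]; apply. Qed.
Lemma starK x : star (star x) = x.
Proof. by case: HC => [_ [_ [_ [_ [_ [+ _]]]]]]; apply. Qed.
Lemma nrm_starM x : nrm (star x * x) = nrm x ^+ 2.
Proof. by case: HC => [_ [_ [_ [_ [_ [_ +]]]]]]; apply. Qed.

Lemma star0 : star 0 = 0.
Proof. by apply: (@addrI _ (star 0)); rewrite -starD !addr0. Qed.
Lemma starN x : star (- x) = - star x.
Proof. by apply/eqP; rewrite -subr_eq0 opprK -starD addNr star0. Qed.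
Lemma starB x y : star (x - y) = star x - star y.
Proof. by rewrite starD starN. Qed.
Lemma star1 : star 1 = 1.
Proof.
have star1M x : star 1 * x = x.
  by rewrite -{2}(starK x) -[star x]mul1r starM starK mulrC.
by rewrite -[star 1]mulr1 star1M.
Qed.
Lemma star_sum (I : Type) (s : seq I) (P : pred I) (F : I -> A) :
  star (\sum_(i <- s | P i) F i) = \sum_(i <- s | P i) star (F i).
Proof. by elim/big_rec2: _ => [|i y1 y2 _ <-]; rewrite ?star0 ?starD. Qed.

Lemma saM x y : sa x -> sa y -> sa (x * y).
Proof. by rewrite /self_adjoint starM mulrC => -> ->. Qed.

Lemma cabs_real (r : R) : cabs (r%:C)%C = `|r|.
Proof. by rewrite /cabs /= expr0n /= addr0 sqrtr_sqr. Qed.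

Lemma nrm0 : nrm 0 = 0.
Proof.
by rewrite -(scale0r (0 : A)) -[0 : C]/((0%:C)%C) nrmZ cabs_real normr0 mul0r.
Qed.
Lemma nrmN x : nrm (- x) = nrm x.
Proof.
rewrite -scaleN1r.
have -> : (-1 : C) = ((-1)%:C)%C by rewrite rmorphN1.
by rewrite nrmZ cabs_real normrN normr1 mul1r.
Qed.
Lemma nrm_distC x y : nrm (x - y) = nrm (y - x).
Proof. by rewrite -nrmN opprB. Qed.

Lemma nrm_star x : nrm (star x) = nrm x.
Proof.
suff le_star z : nrm z <= nrm (star z).
  by apply/eqP; rewrite eq_le le_star -{2}(starK x) le_star.
have [z0|z_neq0] := eqVneq (nrm z) 0; first by rewrite z0 nrm_ge0.
have z_gt0 : 0 < nrm z by rewrite lt_def z_neq0 nrm_ge0.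
by rewrite -(ler_pM2r z_gt0) -expr2 -nrm_starM nrmM.
Qed.

Lemma nrm1 : nrm 1 = 1.
Proof.
have nrm1_neq0 : nrm 1 != 0 by apply/eqP => /nrm_eq0/eqP; rewrite oner_eq0.
by apply: (mulfI nrm1_neq0); rewrite mulr1 -expr2 -nrm_starM star1 mulr1.
Qed.

Lemma nrm_sa_sqr x : sa x -> nrm (x * x) = nrm x ^+ 2.
Proof. by move=> sx; rewrite -nrm_starM sx. Qed.

Lemma nrm_sum (I : Type) (s : seq I) (P : pred I) (F : I -> A) :
  nrm (\sum_(i <- s | P i) F i) <= \sum_(i <- s | P i) nrm (F i).
Proof.
elim/big_rec2: _ => [|i y1 y2 _ h]; first by rewrite nrm0.
by apply: le_trans (nrmD _ _) _; rewrite lerD2l.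
Qed.

Lemma rAD (a b : R) : rA (a + b) = rA a + rA b :> A.
Proof. by rewrite /rA rmorphD /= scalerDl. Qed.
Lemma rAM (a b : R) : rA (a * b) = rA a * rA b :> A.
Proof. by rewrite /rA rmorphM /= -scalerAl mul1r scalerA. Qed.
Lemma rAN (a : R) : rA (- a) = - rA a :> A.
Proof. by rewrite /rA rmorphN /= scaleNr. Qed.
Lemma rA0 : rA 0 = 0 :> A.
Proof. by rewrite /rA rmorph0 scale0r. Qed.
Lemma rA1 : rA 1 = 1 :> A.
Proof. by rewrite /rA rmorph1 scale1r. Qed.
Lemma rA_nat k : rA k%:R = k%:R :> A.
Proof. by rewrite /rA rmorph_nat scaler_nat. Qed.
Lemma sa_rA r : sa (rA r).
Proof. by rewrite /self_adjoint /rA starZ star1 /cconj /= oppr0. Qed.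
Lemma nrm_rAM r x : nrm (rA r * x) = `|r| * nrm x.
Proof. by rewrite /rA -scalerAl mul1r nrmZ cabs_real. Qed.

Definition iA : A := 'i%C *: 1.

Lemma iA_sqr : iA * iA = -1.
Proof. by rewrite /iA -scalerAl mul1r scalerA -expr2 sqr_i scaleN1r. Qed.
Lemma star_iA : star iA = - iA.
Proof.
rewrite /iA starZ star1 -scaleNr; congr (_ *: _).
by apply/eqP; rewrite eq_complex /= oppr0 !eqxx.
Qed.
Lemma nrm_iAM x : nrm (iA * x) = nrm x.
Proof.
by rewrite /iA -scalerAl mul1r nrmZ /cabs /= expr1n expr0n /= add0r sqrtr1 mul1r.
Qed.

Local Notation cv := (cvg_in nrm).

Lemma cvg_in_unique u l l' : cv u l -> cv u l' -> l = l'.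
Proof.
move=> ul ul'; apply/subr0_eq/nrm_eq0/eqP; rewrite eq_le nrm_ge0 andbT.
apply/ler_addgt0Pr => e e_gt0; have e2_gt0 : 0 < e / 2 by lra.
have [N HN] := ul _ e2_gt0; have [N' HN'] := ul' _ e2_gt0.
have := HN _ (leq_maxl N N'); have := HN' _ (leq_maxr N N').
have := nrmD (l - u (maxn N N')) (u (maxn N N') - l').
by rewrite addrA subrK (nrm_distC l (u _)); lra.
Qed.

Lemma cvg_in_le u l B : (forall k, nrm (u k) <= B) -> cv u l -> nrm l <= B.
Proof.
move=> u_le ul; apply/ler_addgt0Pr => e /ul [N /(_ N (leqnn N))].
have := nrmD (l - u N) (u N); rewrite subrK nrm_distC.
by have := u_le N; lra.
Qed.

Lemma cvg_in_shift u l : cv u l -> cv (fun k => u k.+1) l.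
Proof. by move=> ul e /ul [N HN]; exists N => m /leqW /HN. Qed.

Lemma cvg_in_cst c : cv (fun => c) c.
Proof. by move=> e e_gt0; exists 0%N => m _; rewrite subrr nrm0. Qed.

Lemma cvg_in_star u l : cv u l -> cv (star \o u) (star l).
Proof.
by move=> ul e /ul [N HN]; exists N => m /HN; rewrite /= -starB nrm_star.
Qed.

Lemma cvg_inD u v l m : cv u l -> cv v m -> cv (fun k => u k + v k) (l + m).
Proof.
move=> ul vm e e_gt0; have e2_gt0 : 0 < e / 2 by lra.
have [N HN] := ul _ e2_gt0; have [N' HN'] := vm _ e2_gt0.
exists (maxn N N') => k; rewrite geq_max => /andP[/HN uk /HN' vk].
have := nrmD (u k - l) (v k - m); rewrite addrACA -opprD; lra.
Qed.

Lemma cvg_inM u v l m : cv u l -> cv v m -> cv (fun k => u k * v k) (l * m).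
Proof.
move=> ul vm e e_gt0; set K := 1 + nrm l + nrm m.
have K_gt0 : 0 < K by have := nrm_ge0 l; have := nrm_ge0 m; rewrite /K; lra.
pose d := e / (K + e).
have d_gt0 : 0 < d by rewrite divr_gt0 //; lra.
have d_lt1 : d < 1 by rewrite ltr_pdivrMr; lra.
have dK_lt : d * K < e by rewrite mulrAC ltr_pdivrMr ?ltr_pM2l //; lra.
have [N HN] := ul _ d_gt0; have [N' HN'] := vm _ d_gt0.
exists (maxn N N') => k; rewrite geq_max => /andP[/HN uk /HN' vk].
have -> : u k * v k - l * m =
    (u k - l) * (v k - m) + (u k - l) * m + l * (v k - m) by ring.
have le1 := nrmM (u k - l) (v k - m); have le2 := nrmM (u k - l) m.
have le3 := nrmM l (v k - m).
have := nrmD ((u k - l) * (v k - m) + (u k - l) * m) (l * (v k - m)).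
have := nrmD ((u k - l) * (v k - m)) ((u k - l) * m).
have := nrm_ge0 l; have := nrm_ge0 m; have := nrm_ge0 (u k - l).
have := nrm_ge0 (v k - m); rewrite /K in dK_lt; nra.
Qed.

Lemma cvg_in_dominated (y : nat -> A) (r : nat -> R) (B : R) :
  (forall k, r k <= r k.+1) -> (forall k, r k <= B) ->
  (forall k m, (k <= m)%N -> nrm (y m - y k) <= r m - r k) ->
  exists l, cv y l.
Proof.
move=> r_incr r_le_B y_dom; apply: nrm_complete => e e_gt0.
have e2_gt0 : 0 < e / 2 by lra.
have [N HN] := nondecreasing_bounded_cauchy r_incr r_le_B e2_gt0.
exists N => m p m_ge p_ge; have := nrmD (y m - y N) (y N - y p).
rewrite addrA subrK (nrm_distC (y N)).
have := y_dom _ _ m_ge; have := y_dom _ _ p_ge.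
by have := HN _ m_ge; have := HN _ p_ge; lra.
Qed.

Lemma iter_selfmap_nondecreasing (g : R -> R) (B : R) :
  0 <= B -> (forall t, 0 <= t <= B -> 0 <= g t <= B) ->
  (forall s t, 0 <= t -> t <= s -> s <= B -> g t <= g s) ->
  forall k, 0 <= iter k g 0 <= B /\ iter k g 0 <= iter k.+1 g 0.
Proof.
move=> B_ge0 g_map g_mono; elim=> [|k [IHk le_next]] /=.
  have zero_in : (0 : R) <= 0 <= B by rewrite lexx.
  by have /andP[-> _] := g_map 0 zero_in.
have /andP[ge0 leB] := IHk; have /andP[_ leB'] := g_map _ IHk.
by rewrite g_map // g_mono // (le_trans ge0).
Qed.

Definition majorant (g : R -> R) (f : A -> A) :=
  forall x y s t, nrm x <= s -> nrm y <= t -> nrm (x - y) <= s - t ->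
    nrm (f x - f y) <= g s - g t.

Lemma iter_majorized (f : A -> A) (g : R -> R) :
  nrm (f 0) <= g 0 ->
  majorant g f ->
  forall k m, (k <= m)%N ->
    nrm (iter m f 0 - iter k f 0) <= iter m g 0 - iter k g 0.
Proof.
move=> f0_le f_maj.
have iter_le k : nrm (iter k f 0) <= iter k g 0.
  elim: k => [|k IHk] /=; first by rewrite nrm0.
  have := f_maj _ 0 _ 0 IHk; rewrite nrm0 lexx !subr0 => /(_ isT IHk) maj.
  by have := nrmD (f (iter k f 0) - f 0) (f 0); rewrite subrK; lra.
elim=> [|k IHk] m km; first by rewrite !subr0 iter_le.
by case: m km => // m km; apply: f_maj; rewrite ?iter_le ?IHk.
Qed.

Lemma majorized_fixpoint (f : A -> A) (g : R -> R) (B : R) :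
  0 <= B -> (forall t, 0 <= t <= B -> 0 <= g t <= B) ->
  (forall s t, 0 <= t -> t <= s -> s <= B -> g t <= g s) ->
  nrm (f 0) <= g 0 ->
  majorant g f ->
  (forall u l, cv u l -> cv (f \o u) (f l)) ->
  (forall x, sa x -> sa (f x)) ->
  exists Y, [/\ Y = f Y, sa Y & nrm Y <= B].
Proof.
move=> B_ge0 g_map g_mono f0_le f_maj f_cont f_sa.
have g_iter := iter_selfmap_nondecreasing B_ge0 g_map g_mono.
have f_dom := iter_majorized f0_le f_maj.
have [Y fY] : exists Y, cv (fun k => iter k f 0) Y.
  apply: (cvg_in_dominated (r := fun k => iter k g 0) (B := B)) => // k.
  - by case: (g_iter k).
  - by case: (g_iter k) => /andP[].
exists Y; split.
- exact: cvg_in_unique (cvg_in_shift fY) (f_cont _ _ fY).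
- apply: cvg_in_unique (cvg_in_star fY) _.
  have iter_sa k : sa (iter k f 0).
    by elim: k => [|k IHk] /=; [exact: star0|exact: f_sa].
  by move=> e /fY [N HN]; exists N => m /HN; rewrite /= iter_sa.
- apply: cvg_in_le fY => k; have := f_dom 0%N k isT; rewrite !subr0.
  by case: (g_iter k) => /andP[_ leB] _ /le_trans; apply.
Qed.

Lemma saD x y : sa x -> sa y -> sa (x + y).
Proof. by rewrite /self_adjoint starD => -> ->. Qed.
Lemma sa1B x : sa x -> sa (1 - x).
Proof. by rewrite /self_adjoint starB star1 => ->. Qed.

Lemma rA_halfD : rA 2^-1 + rA 2^-1 = 1 :> A.
Proof. by rewrite -rAD -rA1; congr rA; lra. Qed.
Lemma nrm_rA_halfM x : nrm (rA 2^-1 * x) = 2^-1 * nrm x.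
Proof. by rewrite nrm_rAM ger0_norm // invr_ge0 ler0n. Qed.

Lemma sqrt_one_sub h B : sa h -> nrm h + B ^+ 2 <= B *+ 2 ->
  exists b, [/\ sa b, 1 - h = b * b & nrm (1 - b) <= B].
Proof.
move=> sa_h hB; have h_ge0 := nrm_ge0 h.
have B_ge0 : 0 <= B by have := sqr_ge0 B; lra.
pose f z := rA 2^-1 * (h + z * z); pose g t := 2^-1 * (nrm h + t * t).
have g_map t : 0 <= t <= B -> 0 <= g t <= B.
  move=> /andP[t_ge0 tB]; have := ler_pM t_ge0 t_ge0 tB tB.
  by have := mulr_ge0 t_ge0 t_ge0; rewrite /g; lra.
have g_mono s t : 0 <= t -> t <= s -> s <= B -> g t <= g s.
  by move=> t_ge0 ts _; have := ler_pM t_ge0 t_ge0 ts ts; rewrite /g; lra.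
have f0_le : nrm (f 0) <= g 0 by rewrite /f /g !mulr0 !addr0 nrm_rA_halfM.
have f_maj : majorant g f.
  move=> x y s t xs yt xys; rewrite /f /g.
  rewrite (_ : _ - _ = rA 2^-1 * ((x - y) * (x + y))); last by ring.
  rewrite nrm_rA_halfM; apply: le_trans (ler_wpM2l _ (nrmM _ _)) _.
    by rewrite invr_ge0 ler0n.
  have := ler_pM (nrm_ge0 _) (nrm_ge0 _) xys (le_trans (nrmD x y) (lerD xs yt)).
  by lra.
have f_cont u l : cv u l -> cv (f \o u) (f l).
  move=> ul; apply: cvg_inM (cvg_in_cst _) _.
  exact: cvg_inD (cvg_in_cst _) (cvg_inM ul ul).
have f_sa x : sa x -> sa (f x).
  by move=> sa_x; apply: saM (sa_rA _) (saD sa_h (saM sa_x sa_x)).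
have [Y [fixY sa_Y nrm_Y]] :=
  majorized_fixpoint B_ge0 g_map g_mono f0_le f_maj f_cont f_sa.
have YY : Y + Y = h + Y * Y by rewrite {1 2}fixY -mulrDl rA_halfD mul1r.
exists (1 - Y); split; first exact: sa1B.
  apply/eqP; rewrite -subr_eq0; apply/eqP.
  by transitivity (Y + Y - (h + Y * Y)); [ring|rewrite YY subrr].
by rewrite opprB addrC subrK.
Qed.

Lemma inv_one_sub Y : sa Y -> nrm Y <= 2^-1 ->
  exists w, [/\ sa w, (1 - Y) * w = 1 & nrm w <= 2].
Proof.
move=> sa_Y nrm_Y; have Y_ge0 := nrm_ge0 Y.
pose f z := 1 + Y * z; pose g (t : R) := 1 + 2^-1 * t.
have g_map t : 0 <= t <= 2 -> 0 <= g t <= 2.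
  by move=> /andP[t_ge0 t_le]; apply/andP; split; rewrite /g; lra.
have g_mono s t : 0 <= t -> t <= s -> s <= 2 -> g t <= g s by rewrite /g; lra.
have f0_le : nrm (f 0) <= g 0 by rewrite /f /g !mulr0 !addr0 nrm1.
have f_maj : majorant g f.
  move=> x y s t _ _ xys; rewrite /f /g (_ : _ - _ = Y * (x - y)); last by ring.
  have := ler_pM Y_ge0 (nrm_ge0 _) nrm_Y xys; have := nrmM Y (x - y); lra.
have f_cont u l : cv u l -> cv (f \o u) (f l).
  by move=> ul; apply: cvg_inD (cvg_in_cst _) (cvg_inM (cvg_in_cst _) ul).
have f_sa x : sa x -> sa (f x) by move=> sa_x; apply: saD star1 (saM sa_Y sa_x).
have [W [fixW sa_W nrm_W]] :=
  majorized_fixpoint (ler0n _ 2) g_map g_mono f0_le f_maj f_cont f_sa.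
by exists W; split; rewrite // mulrBl mul1r {1}fixW addrK.
Qed.

(* [u = z + i e] is unitary and [2 i e = u - u^*]. *)
Lemma sa_sqr_add_eq1_nrm_le1 z e : sa z -> sa e -> z * z + e * e = 1 -> nrm e <= 1.
Proof.
move=> sa_z sa_e zzee; pose u := z + iA * e.
have star_u : star u = z - iA * e by rewrite starD starM sa_z sa_e star_iA; ring.
have nrm_u : nrm u <= 1.
  have uu : star u * u = 1.
    rewrite star_u /u -zzee; transitivity (z * z - (iA * iA) * (e * e)); first ring.
    by rewrite iA_sqr mulN1r opprK.
  have : nrm u ^+ 2 = 1 by rewrite -nrm_starM uu nrm1.
  by have := nrm_ge0 u; rewrite expr2; nra.
have : u - star u = iA * (rA 2 * e) by rewrite star_u /u -[2]/(1 + 1) rAD rA1; ring.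
move=> /(congr1 nrm); rewrite nrm_iAM nrm_rAM ger0_norm // => nrm_2e.
by have := nrmD u (- star u); rewrite nrm_2e nrmN nrm_star; lra.
Qed.

Lemma nrmM_le1 x y : nrm x <= 1 -> nrm y <= 1 -> nrm (x * y) <= 1.
Proof.
move=> x_le1 y_le1; apply: le_trans (nrmM x y) _.
by rewrite -[1]mulr1; apply: ler_pM; rewrite ?nrm_ge0.
Qed.

Lemma sqrt_one_sub_sqr x : sa x -> nrm x <= 1 ->
  exists2 b, sa b & 1 - x * x = b * b.
Proof.
move=> sa_x nrm_x; have nrm_xx := nrmM_le1 nrm_x nrm_x.
have nrm_xx1 : nrm (x * x) + 1 ^+ 2 <= 1 *+ 2 by rewrite expr1n; lra.
by have [b [sa_b bb _]] := sqrt_one_sub (saM sa_x sa_x) nrm_xx1; exists b.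
Qed.

Lemma invertible_sqrt_one_sub_sqr g : sa g -> nrm g <= 2^-1 ->
  exists s w, [/\ sa s, sa w, s * s + g * g = 1, s * w = 1 & nrm w <= 2].
Proof.
move=> sa_g nrm_g.
have nrm_gg : nrm (g * g) + 2^-1 ^+ 2 <= 2^-1 *+ 2.
  rewrite nrm_sa_sqr // expr2.
  by have := ler_pM (nrm_ge0 _) (nrm_ge0 _) nrm_g nrm_g; lra.
have [s [sa_s ss nrm_1s]] := sqrt_one_sub (saM sa_g sa_g) nrm_gg.
have [w [sa_w sw nrm_w]] := inv_one_sub (sa1B sa_s) nrm_1s.
exists s, w; split; rewrite -?ss ?subrK //.
by rewrite opprB addrC subrK in sw.
Qed.

(* With [s = sqrt (1 - g^2)], [w = s^-1], [q = f w] and [t = sqrt (1 - q^2)],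
   the element [e = s t] has norm at most 1 and [1 - e^2 = g^2 + f^2]. *)
Lemma sa_sqr_add_small g f : sa g -> sa f -> nrm g <= 2^-1 -> nrm f <= 2^-1 ->
  exists2 G, sa G & g * g + f * f = G * G.
Proof.
move=> sa_g sa_f nrm_g nrm_f.
have [s [w [sa_s sa_w ss sw nrm_w]]] := invertible_sqrt_one_sub_sqr sa_g nrm_g.
have nrm_s : nrm s <= 1 by apply: sa_sqr_add_eq1_nrm_le1 sa_g sa_s _; rewrite addrC.
pose q := f * w; have sa_q : sa q := saM sa_f sa_w.
have nrm_q : nrm q <= 1.
  apply: le_trans (nrmM f w) _.
  by have := ler_pM (nrm_ge0 _) (nrm_ge0 _) nrm_f nrm_w; lra.
have [t sa_t tt] := sqrt_one_sub_sqr sa_q nrm_q.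
have nrm_t : nrm t <= 1.
  by apply: sa_sqr_add_eq1_nrm_le1 sa_q sa_t _; rewrite -tt addrC subrK.
pose e := s * t; have sa_e : sa e := saM sa_s sa_t.
have [G sa_G GG] := sqrt_one_sub_sqr sa_e (nrmM_le1 nrm_s nrm_t).
exists G => //; rewrite -GG.
have -> : e * e = s * s - (s * w) * (s * w) * (f * f).
  by transitivity (s * s * (t * t)); [rewrite /e | rewrite -tt /q]; ring.
by rewrite sw !mul1r -ss; ring.
Qed.

Definition sa_square (p : A) := exists2 g, sa g & p = g * g.

Lemma sa_square0 : sa_square 0.
Proof. by exists 0; rewrite ?mulr0 /self_adjoint ?star0. Qed.

Lemma sa_square_sa p : sa_square p -> sa p.
Proof. by case=> g sa_g ->; apply: saM. Qed.

Lemma sa_square_cpos p : sa_square p -> cpos star p.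
Proof. by case=> g sa_g ->; exists g; rewrite sa_g. Qed.

Lemma sa_square_rAM r p : 0 <= r -> sa_square p -> sa_square (rA r * p).
Proof.
move=> r_ge0 [g sa_g ->]; exists (rA (Num.sqrt r) * g).
  exact: saM (sa_rA _) sa_g.
by rewrite mulrACA -rAM -[Num.sqrt r * _]expr2 sqr_sqrtr.
Qed.

Lemma sa_squareD p q : sa_square p -> sa_square q -> sa_square (p + q).
Proof.
move=> [g sa_g ->] [f sa_f ->].
pose c := 2 * (nrm g + nrm f + 1).
have c_gt0 : 0 < c by have := nrm_ge0 g; have := nrm_ge0 f; rewrite /c; lra.
have small x : nrm x <= nrm g + nrm f -> nrm (rA c^-1 * x) <= 2^-1.
  move=> x_le; rewrite nrm_rAM ger0_norm ?invr_ge0 ?(ltW c_gt0) //.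
  by rewrite mulrC ler_pdivrMr // /c; lra.
have g_le : nrm g <= nrm g + nrm f by have := nrm_ge0 f; lra.
have f_le : nrm f <= nrm g + nrm f by have := nrm_ge0 g; lra.
have [G sa_G GG] := sa_sqr_add_small (saM (sa_rA _) sa_g) (saM (sa_rA _) sa_f)
  (small g g_le) (small f f_le).
exists (rA c * G); first exact: saM (sa_rA _) sa_G.
have cc : rA c * rA c^-1 = 1 :> A by rewrite -rAM mulfV ?gt_eqF ?rA1.
transitivity (rA c * rA c *
  ((rA c^-1 * g) * (rA c^-1 * g) + (rA c^-1 * f) * (rA c^-1 * f))).
  by transitivity ((rA c * rA c^-1) * (rA c * rA c^-1) * (g * g + f * f));
    [rewrite cc !mul1r | ring].
by rewrite GG; ring.
Qed.

Lemma sa_square_sum (I : Type) (s : seq I) (P : pred I) (F : I -> A) :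
  (forall i, P i -> sa_square (F i)) -> sa_square (\sum_(i <- s | P i) F i).
Proof.
by move=> F_sq; apply: big_ind => //; [exact: sa_square0|exact: sa_squareD].
Qed.

Lemma sa_square_starM a : sa_square (star a * a).
Proof.
pose x := rA 2^-1 * (a + star a); pose y := iA * (rA 2^-1 * (a - star a)).
have sa_x : sa x by rewrite /x /self_adjoint starM starD starK sa_rA addrC mulrC.
have sa_y : sa y.
  by rewrite /y /self_adjoint !starM star_iA sa_rA starB starK; ring.
have -> : star a * a = x * x + y * y.
  transitivity ((rA 2^-1 + rA 2^-1) * (rA 2^-1 + rA 2^-1) * (star a * a)).
    by rewrite rA_halfD !mul1r.
  by rewrite /x /y; transitivity (rA 2^-1 * rA 2^-1 * ((a + star a) * (a + star a)
    + (iA * iA) * ((a - star a) * (a - star a)))); [rewrite iA_sqr; ring | ring].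
by apply: sa_squareD; [exists x | exists y].
Qed.

Lemma cpos_sa_square p : cpos star p -> sa_square p.
Proof. by case=> b ->; apply: sa_square_starM. Qed.

Lemma sa_square_nrm_sub M : sa M -> sa_square (rA (nrm M) - M).
Proof.
move=> sa_M; have [M0|M_neq0] := eqVneq (nrm M) 0.
  by rewrite M0 (nrm_eq0 M0) rA0 subrr; apply: sa_square0.
have M_gt0 : 0 < nrm M by rewrite lt_def M_neq0 nrm_ge0.
pose h := rA (nrm M)^-1 * M; have sa_h : sa h := saM (sa_rA _) sa_M.
have nrm_h : nrm h + 1 ^+ 2 <= 1 *+ 2.
  by rewrite nrm_rAM ger0_norm ?invr_ge0 ?nrm_ge0 // mulVf // expr1n.
have [b [sa_b bb _]] := sqrt_one_sub sa_h nrm_h.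
have -> : rA (nrm M) - M = rA (nrm M) * (1 - h).
  by rewrite /h mulrBr mulr1 mulrA -rAM mulfV // rA1 mul1r.
by rewrite bb; apply: sa_square_rAM (nrm_ge0 _) _; exists b.
Qed.

Lemma nrm_le1_cpos_one_sub a : cpos star (1 - star a * a) -> nrm a <= 1.
Proof.
move=> /cpos_sa_square [e sa_e ee]; have [z sa_z zz] := sa_square_starM a.
have nrm_z : nrm z <= 1.
  by apply: sa_sqr_add_eq1_nrm_le1 sa_e sa_z _; rewrite -ee -zz subrK.
have := nrm_starM a; rewrite zz nrm_sa_sqr // !expr2.
by have := nrm_ge0 a; have := nrm_ge0 z; nra.
Qed.

Lemma cle_sa_square a b : sa a -> sa b -> sa_square (b - a) -> cle star a b.
Proof. by move=> sa_a sa_b /sa_square_cpos. Qed.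

Lemma sum_sqr_sub_mean (m : nat) (F : 'I_m -> A) (s : R) :
  (0 < m)%N -> \sum_(i < m) F i = rA s ->
  \sum_(i < m) (F i - rA (s / m%:R)) * star (F i - rA (s / m%:R)) =
  \sum_(i < m) F i * star (F i) - rA (s ^+ 2 / m%:R).
Proof.
move=> m_gt0 sumF; set c := s / m%:R.
have sum_star : \sum_(i < m) star (F i) = rA s by rewrite -star_sum sumF sa_rA.
transitivity (\sum_(i < m)
    (F i * star (F i) - (rA c * star (F i) + rA c * F i) + rA c * rA c)).
  by apply: eq_bigr => i _; rewrite starB sa_rA; ring.
rewrite big_split sumrB big_split /= -!mulr_sumr sum_star sumF sumr_const card_ord.
rewrite -[_ *+ m]mulr_natr -(rA_nat m) -!rAM -[rA (c * s) + _]rAD -addrA.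
congr (_ + _); rewrite -!rAN -rAD; congr rA.
by rewrite /c; field; rewrite pnatr_eq0 -lt0n.
Qed.

Section HilbertModule.
Variables (E : lmodType A) (ip : E -> E -> A).
Hypothesis Hip : hilbert_module star nrm ip.

Lemma ipDZl a x y z : ip (a *: x + y) z = a * ip x z + ip y z.
Proof. by case: Hip => + _; apply. Qed.
Lemma ip_star x y : ip y x = star (ip x y).
Proof. by case: Hip => _ [+ _]; apply. Qed.
Lemma ip_cpos x : cpos star (ip x x).
Proof. by case: Hip => _ [_ [+ _]]; apply. Qed.

Lemma ip0l z : ip 0 z = 0.
Proof.
have := ipDZl 1 0 0 z; rewrite scaler0 addr0 mul1r => ip0_double.
by apply: (@addrI _ (ip 0 z)); rewrite -ip0_double addr0.
Qed.
Lemma ipBZl a x y z : ip (x - a *: y) z = ip x z - a * ip y z.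
Proof. by rewrite addrC -scaleNr ipDZl mulNr addrC. Qed.
Lemma ip_suml (I : Type) (s : seq I) (P : pred I) (c : I -> A) (x : I -> E) z :
  ip (\sum_(i <- s | P i) c i *: x i) z = \sum_(i <- s | P i) c i * ip (x i) z.
Proof. by elim/big_rec2: _ => [|i y1 y2 _ <-]; rewrite ?ip0l ?ipDZl. Qed.

Lemma nrm_ip_le1 x y : ip x x = 1 -> ip y y = 1 -> nrm (ip x y) <= 1.
Proof.
move=> xx yy; set a := ip x y; apply: nrm_le1_cpos_one_sub.
have ip_x : ip x (x - a *: y) = 1 - a * star a.
  by rewrite ip_star ipBZl xx (ip_star x y) starB star1 starM starK mulrC.
have ip_y : ip y (x - a *: y) = 0.
  by rewrite ip_star ipBZl yy mulr1 subrr star0.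
by have := ip_cpos (x - a *: y); rewrite ipBZl ip_x ip_y mulr0 subr0 mulrC.
Qed.

Variables (n : nat) (tau : 'I_n -> E).
Hypothesis tau_unit : forall j, ip (tau j) (tau j) = 1.

Lemma nrm_MFP_le : nrm (MFP ip tau) <= n%:R ^+ 2.
Proof.
rewrite /MFP (le_trans (nrm_sum _ _ _)) //.
rewrite -[_ ^+ 2](_ : \sum_(j < n) \sum_(k < n) (1 : R) = _); last first.
  by rewrite !sumr_const card_ord expr2 mulr_natr.
apply: ler_sum => j _; apply: le_trans (nrm_sum _ _ _) _.
by apply: ler_sum => k _; apply: nrmM_le1; apply: nrm_ip_le1.
Qed.

Variables (d : nat) (w : 'I_d -> E).
Hypothesis w_frame : forall x, x = \sum_(i < d) ip x (w i) *: w i.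

Lemma ip_frame x y : ip x y = \sum_(i < d) ip x (w i) * star (ip y (w i)).
Proof.
rewrite [in LHS](w_frame x) ip_suml; apply: eq_bigr => i _.
by rewrite (ip_star y).
Qed.

(* The matrix of the frame operator [x |-> \sum_j <x, tau_j> tau_j] in [w]. *)
Definition frame_mx (i l : 'I_d) : A :=
  \sum_(j < n) ip (tau j) (w i) * star (ip (tau j) (w l)).

Lemma MFP_frame_mx :
  MFP ip tau = \sum_(i < d) \sum_(l < d) frame_mx i l * star (frame_mx i l).
Proof.
pose x j i := ip (tau j) (w i).
transitivity (\sum_(j < n) \sum_(k < n) \sum_(i < d) \sum_(l < d)
    (x j i * star (x k i)) * (x k l * star (x j l))).
  apply: eq_bigr => j _; apply: eq_bigr => k _.
  by rewrite !ip_frame mulr_suml; apply: eq_bigr => i _; rewrite mulr_sumr.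
under eq_bigr => j _ do rewrite exchange_big.
under eq_bigr => j _ do under eq_bigr => i _ do rewrite exchange_big.
rewrite exchange_big; apply: eq_bigr => i _; rewrite exchange_big.
apply: eq_bigr => l _; rewrite /frame_mx star_sum mulr_suml; apply: eq_bigr => j _.
by rewrite mulr_sumr; apply: eq_bigr => k _; rewrite starM starK /x; ring.
Qed.

Lemma sa_square_MFP : sa_square (MFP ip tau).
Proof.
rewrite MFP_frame_mx; apply: sa_square_sum => i _; apply: sa_square_sum => l _.
by rewrite mulrC; apply: sa_square_starM.
Qed.

Lemma trace_frame_mx : \sum_(i < d) frame_mx i i = n%:R.
Proof.
rewrite /frame_mx exchange_big /=.
transitivity (\sum_(j < n) (1 : A)); last by rewrite sumr_const card_ord.
by apply: eq_bigr => j _; rewrite -ip_frame tau_unit.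
Qed.

Lemma sa_square_MFP_sub : sa_square (MFP ip tau - rA (n%:R ^+ 2 / d%:R)).
Proof.
have [->|d_gt0] := posnP d.
  by rewrite invr0 mulr0 rA0 subr0; apply: sa_square_MFP.
have trace : \sum_(i < d) frame_mx i i = rA n%:R by rewrite rA_nat trace_frame_mx.
rewrite MFP_frame_mx (eq_bigr _ (fun i _ => bigD1 i isT)) big_split /=.
rewrite addrAC -(sum_sqr_sub_mean d_gt0 trace).
apply: sa_squareD; apply: sa_square_sum => i _; last apply: sa_square_sum => l _.
all: by rewrite mulrC; apply: sa_square_starM.
Qed.

End HilbertModule.
End CommutativeCStarAlgebra.

Theorem proposition3p4 (R : realType) (A : comAlgType R[i]) (star : A -> A)
  (nrm : A -> R) (E : lmodType A) (ip : E -> E -> A) (d n : nat)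
  (tau : 'I_n -> E) :
  is_CStar star nrm ->
  ((W_star nrm /\ sigma_finite star) \/ AW_star star nrm) ->
  hilbert_module star nrm ip ->
  has_rank ip d ->
  (forall j, ip (tau j) (tau j) = 1) ->
  [/\ nrm (MFP ip tau) <= n%:R ^+ 2,
      cle star (MFP ip tau) (rA (nrm (MFP ip tau))) &
      cle star (rA (n%:R ^+ 2 / d%:R)) (MFP ip tau)].
Proof.
move=> HC _ Hip [w [_ w_frame]] tau_unit.
have sq_MFP := sa_square_MFP HC Hip tau w_frame.
have sa_MFP := sa_square_sa HC sq_MFP.
split.
- exact: (nrm_MFP_le HC Hip tau_unit).
- exact: cle_sa_square (sa_rA HC _) (sa_square_nrm_sub HC sa_MFP).
- apply: cle_sa_square (sa_rA HC _) sa_MFP _.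
  exact: (sa_square_MFP_sub HC Hip tau_unit w_frame).
Qed.
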